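(* Suppose that $\phi\in\mathbb{Q}(x)$ has degree $2$, has a $2$-periodic critical point, and that $\operatorname{Aut}(\phi)$ is trivial. Then $\phi$ is linearly conjugate over $\mathbb{Q}$ to a map of the form $\phi_v=\dfrac{v(x-1)}{x^2}$ with $v\in\mathbb{Q}\setminus\{0\}$.
   Context: A point $P\in\mathbb{P}^1(\overline{\mathbb{Q}})$ is $2$-periodic if $\phi^2(P)=P\neq\phi(P)$; a critical point is a point where $\phi:\mathbb{P}^1\to\mathbb{P}^1$ ramifies. $\operatorname{Aut}(\phi)$ is the group of degree-one $\sigma\in\overline{\mathbb{Q}}(x)$ with $\sigma^{-1}\circ\phi\circ\sigma=\phi$. Linear conjugacy over $\mathbb{Q}$: $\psi=\sigma^{-1}\circ\phi\circ\sigma$ for some degree-one $\sigma\in\mathbb{Q}(x)$. *)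

(* Qbar is modelled by algC (algebraic numbers), with Q
   embedded via ratr.  Points of P^1(Qbar) are nonzero pairs (x,y) = [x:y],
   compared up to scaling with peq.  A rational map phi = f/g in Q(x) of
   degree <= 2 is encoded by polynomials f g : {poly rat} and acts on P^1 by
   the homogenized quadratic forms F(X,Y) = Y^2 f(X/Y), G(X,Y) = Y^2 g(X/Y). *)
From mathcomp Require Import all_boot all_order all_algebra all_field.
Set Implicit Arguments. Unset Strict Implicit. Unset Printing Implicit Defensive.
Import GRing.Theory Num.Theory.
Local Open Scope ring_scope.

Definition pt := (algC * algC)%type.

Definition nzpt (P : pt) : bool := (P.1 != 0) || (P.2 != 0).

Definition peq (P Q : pt) : bool := P.1 * Q.2 == Q.1 * P.2.

Definition hom2 (f : {poly rat}) (P : pt) : algC :=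
  \sum_(i < 3) ratr f`_i * P.1 ^+ i * P.2 ^+ (2 - i).

Definition happ (f g : {poly rat}) (P : pt) : pt := (hom2 f P, hom2 g P).

Definition is_deg2 (f g : {poly rat}) : bool :=
  coprimep f g && (maxn (size f) (size g) == 3)%N.

Definition period2 (f g : {poly rat}) (P : pt) : Prop :=
  [/\ nzpt P, peq (happ f g (happ f g P)) P & ~~ peq (happ f g P) P].

(* P is a critical point: phi ramifies at P, i.e. with phi(P) = [a:b], the
   fibre form b F - a G vanishes to order >= 2 at P = [p:q], i.e. is
   divisible by (q X - p Y)^2 (it has degree 2). *)
Definition critical (f g : {poly rat}) (P : pt) : Prop :=
  nzpt P /\
  exists c : algC, forall x y : algC,
    (happ f g P).2 * hom2 f (x, y) - (happ f g P).1 * hom2 g (x, y)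
      = c * (P.2 * x - P.1 * y) ^+ 2.

Definition mob (a b c d : algC) (P : pt) : pt :=
  (a * P.1 + b * P.2, c * P.1 + d * P.2).

(* Aut(phi) is trivial: every degree-one sigma in Qbar(x) with
   sigma^-1 o phi o sigma = phi (equivalently phi o sigma = sigma o phi
   on P^1(Qbar)) is the identity. *)
Definition trivial_aut (f g : {poly rat}) : Prop :=
  forall a b c d : algC, a * d - b * c != 0 ->
    (forall P, nzpt P ->
       peq (happ f g (mob a b c d P)) (mob a b c d (happ f g P))) ->
    [/\ b = 0, c = 0 & a = d].

Definition phiv_num (v : rat) : {poly rat} := v *: ('X - 1).
Definition phiv_den : {poly rat} := 'X^2.

From mathcomp Require Import all_boot all_order all_algebra all_field.
From mathcomp Require Import ring.
Import GRing.Theory Num.Theory.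
Local Open Scope ring_scope.

(* Conjugating by the Moebius map sending 0 and oo to a critical 2-periodic
   point P and to phi(P) puts phi in the normal form x |-> (D + a x) / (b x^2).
   If a = 0, this commutes with x |-> w x for a primitive cube root of unity w,
   contradicting Aut(phi) = 1.  If a <> 0, the other critical point -2D/a is
   not 2-periodic, so P is the only critical 2-periodic point.  Critical points
   are the roots of a rational quadratic and 2-periodic points are cut out by
   rational polynomials, so the Galois conjugate of an irrational P would be a
   second one: P is rational, the conjugation is defined over Q, and rescaling
   x by -D/a yields phi_v with v = a^3 / (b D^2). *)

(* [ring] and [field] ignore hypotheses; this closes a goal modulo [L = M]. *)
Lemma eq_lincomb {R : pzRingType} (K : R) {L M A B : R} :
  L = M -> A - K * (L - M) = B -> A = B.
Proof. by move=> ->; rewrite subrr mulr0 subr0. Qed.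

Lemma size_poly_leq_coef0 {R : nzSemiRingType} {f : {poly R}} {n : nat} :
  (size f <= n.+1)%N -> f`_n = 0 -> (size f <= n)%N.
Proof.
move=> hs hn; apply/leq_sizeP => j; rewrite leq_eqVlt => /predU1P [<- // | hj].
exact: nth_default (leq_trans hs hj).
Qed.

Lemma horner_map_size3 (f : {poly rat}) (z : algC) : (size f <= 3)%N ->
  (map_poly ratr f).[z] = ratr f`_0 + ratr f`_1 * z + ratr f`_2 * z ^+ 2.
Proof.
move=> hs; rewrite (horner_coef_wide _ (n := 3)) ?size_map_poly //.
by rewrite !big_ord_recr big_ord0 /= add0r !coef_map /= expr0 expr1 mulr1.
Qed.

Lemma Crat_linear_root (c0 c1 : rat) (x : algC) :
  c1 != 0 -> ratr c0 + ratr c1 * x = 0 -> x \in Crat.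
Proof.
move=> c1_neq0 root_x; have c1C : (ratr c1 : algC) != 0 by rewrite fmorph_eq0.
suff -> : x = ratr (- c0 / c1) by apply: Crat_rat.
rewrite fmorph_div rmorphN /=.
by apply: (eq_lincomb ((ratr c1)^-1) root_x); field.
Qed.

Lemma coprimep_proportional {F : fieldType} {f g : {poly F}} :
  (forall i j, f`_i * g`_j = f`_j * g`_i) -> coprimep f g ->
  (size f <= 1)%N && (size g <= 1)%N.
Proof.
move=> minors0; have [->|f_neq0] := eqVneq f 0.
  by rewrite coprime0p size_poly0 => /eqp_size; rewrite size_poly1 => ->.
have lf_neq0 : f`_(size f).-1 != 0 by rewrite -lead_coefE lead_coef_eq0.
set j := (size f).-1 in lf_neq0.
have eg : g = (g`_j / f`_j) *: f.
  apply/polyP => i; rewrite coefZ; apply: (mulfI lf_neq0).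
  by rewrite minors0; field.
move=> cop; have [gj0|gj_neq0] := eqVneq g`_j 0.
  move: cop; rewrite eg gj0 mul0r scale0r coprimep0 size_poly0 andbT.
  by move/eqp_size; rewrite size_poly1 => ->.
have f_dvd_g : f %| g by rewrite eg dvdpZr ?dvdpp // mulf_neq0 ?invr_neq0.
have /eqP size_f1 : size f == 1%N by rewrite -coprimepp (coprimep_dvdl f_dvd_g).
by rewrite eg (leq_trans (size_scale_leq _ _)) size_f1.
Qed.

Lemma cube_root_unity : exists2 w : algC, w != 1 & w ^+ 3 = 1.
Proof.
pose w : algC := (-1 + sqrtC (-3)) / 2.
have w_root : w ^+ 2 + w + 1 = 0.
  have -> : w ^+ 2 + w + 1 = (sqrtC (-3) ^+ 2 + 3) / 4 by rewrite /w; field.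
  by rewrite sqrtCK addNr mul0r.
exists w.
  apply/eqP => w1; suff : (3%:R : algC) = 0 by move/eqP; rewrite pnatr_eq0.
  by rewrite -w_root w1; ring.
apply/eqP; rewrite -subr_eq0; apply/eqP.
by apply: (eq_lincomb (w - 1) w_root); ring.
Qed.

(** * Points of P^1 and Moebius maps *)

Definition scale_pt (k : algC) (P : pt) : pt := (k * P.1, k * P.2).

Lemma hom2E (f : {poly rat}) (x y : algC) :
  hom2 f (x, y) = ratr f`_0 * y ^+ 2 + ratr f`_1 * x * y + ratr f`_2 * x ^+ 2.
Proof. by rewrite /hom2 !big_ord_recr big_ord0 /= add0r !expr0 !expr1 !mulr1. Qed.

Lemma hom2_Crat f x y : x \in Crat -> y \in Crat -> hom2 f (x, y) \in Crat.
Proof.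
move=> xC yC; rewrite hom2E.
move: (Crat_rat f`_0) (Crat_rat f`_1) (Crat_rat f`_2).
move: (ratr f`_0 : algC) (ratr f`_1 : algC) (ratr f`_2 : algC) => f0 f1 f2 f0C f1C f2C.
by rewrite !rpredD ?rpredM ?rpredX.
Qed.

Lemma hom2_comb f r p s q X Y :
  hom2 f (r * X + p * Y, s * X + q * Y) =
  hom2 f (r, s) * X ^+ 2 + hom2 f (p, q) * Y ^+ 2
  + (hom2 f (r + p, s + q) - hom2 f (r, s) - hom2 f (p, q)) * X * Y.
Proof. rewrite !hom2E; ring. Qed.

Lemma happ_scale f g (k : algC) P :
  happ f g (scale_pt k P) = scale_pt (k ^+ 2) (happ f g P).
Proof. by case: P => x y; rewrite /happ /scale_pt /= !hom2E; congr pair; ring. Qed.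

Lemma nzpt_scale (k : algC) P : k != 0 -> nzpt (scale_pt k P) = nzpt P.
Proof. by move=> k_neq0; rewrite /nzpt /= !mulf_eq0 (negbTE k_neq0). Qed.

Lemma peq_scalel (k : algC) P Q : k != 0 -> peq (scale_pt k P) Q = peq P Q.
Proof.
by move=> k_neq0; rewrite /peq /= -mulrA [Q.1 * _]mulrCA (inj_eq (mulfI k_neq0)).
Qed.

Lemma peq_scaler (k : algC) P Q : k != 0 -> peq P (scale_pt k Q) = peq P Q.
Proof.
by move=> k_neq0; rewrite /peq /= [_ * (k * _)]mulrCA -mulrA (inj_eq (mulfI k_neq0)).
Qed.

Lemma mob_scale a b c d (k : algC) P :
  mob a b c d (scale_pt k P) = scale_pt k (mob a b c d P).
Proof. rewrite /mob /scale_pt /=; congr pair; ring. Qed.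

Lemma peq_mob a b c d P Q : a * d - b * c != 0 ->
  peq (mob a b c d P) (mob a b c d Q) = peq P Q.
Proof.
move=> det_neq0; rewrite /peq /mob /= -subr_eq0 -[P.1 * _ == _]subr_eq0.
have -> : (a * P.1 + b * P.2) * (c * Q.1 + d * Q.2) -
    (a * Q.1 + b * Q.2) * (c * P.1 + d * P.2) =
    (a * d - b * c) * (P.1 * Q.2 - Q.1 * P.2) by ring.
by rewrite mulf_eq0 (negbTE det_neq0).
Qed.

Lemma mob_adjK {a b c d : algC} P : a * d - b * c != 0 ->
  mob a b c d (scale_pt (a * d - b * c)^-1 (mob d (- b) (- c) a P)) = P.
Proof. by case: P => x y det_neq0; rewrite /mob /scale_pt /=; congr pair; field. Qed.

Lemma critical_scale {f g : {poly rat}} {k : algC} {P : pt} :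
  k != 0 -> critical f g P -> critical f g (scale_pt k P).
Proof.
move=> k_neq0 [nzP [c crit]]; rewrite /critical nzpt_scale //; split=> //.
exists c => x y; rewrite happ_scale.
by apply: (eq_lincomb (k ^+ 2) (crit x y)); rewrite /scale_pt /=; ring.
Qed.

Lemma period2_scale {f g : {poly rat}} {k : algC} {P : pt} :
  k != 0 -> period2 f g P -> period2 f g (scale_pt k P).
Proof.
move=> k_neq0 [nzP per nfix]; have k2_neq0 : k ^+ 2 != 0 by rewrite expf_neq0.
split; first by rewrite nzpt_scale.
- by rewrite !happ_scale peq_scalel ?expf_neq0 // peq_scaler.
- by rewrite happ_scale peq_scalel // peq_scaler.
Qed.

Section Degree2.

Context {f g : {poly rat}}.
Hypothesis deg2 : is_deg2 f g.

Lemma size_deg2 : (size f <= 3)%N /\ (size g <= 3)%N.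
Proof. by case/andP: deg2 => _ /eqP max3; rewrite -max3 leq_maxl leq_maxr. Qed.

Lemma happ_nzpt {P : pt} : nzpt P -> nzpt (happ f g P).
Proof.
have [size_f size_g] := size_deg2; case/andP: (deg2) => cop /eqP max3.
case: P => x y; rewrite /nzpt /happ /= => nzP; rewrite -negb_and.
apply/negP => /andP [/eqP fxy0 /eqP gxy0].
have [y0|y_neq0] := eqVneq y 0.
  move: nzP fxy0 gxy0; rewrite y0 eqxx orbF !hom2E !expr0n /= !mulr0 !add0r => x_neq0.
  have x2_neq0 : x ^+ 2 != 0 by rewrite expf_neq0.
  move=> /eqP; rewrite mulf_eq0 (negbTE x2_neq0) orbF fmorph_eq0 => /eqP f2.
  move=> /eqP; rewrite mulf_eq0 (negbTE x2_neq0) orbF fmorph_eq0 => /eqP g2.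
  suff : (maxn (size f) (size g) <= 2)%N by rewrite max3.
  by rewrite geq_max (size_poly_leq_coef0 size_f f2) (size_poly_leq_coef0 size_g g2).
have /coprimep_root : coprimep (map_poly ratr f) (map_poly (ratr : rat -> algC) g).
  by rewrite coprimep_map.
move=> /(_ (x / y)); rewrite /root !horner_map_size3 //.
have hom2_aff (h : {poly rat}) :
    ratr h`_0 + ratr h`_1 * (x / y) + ratr h`_2 * (x / y) ^+ 2 = hom2 h (x, y) / y ^+ 2.
  by rewrite hom2E; field.
by rewrite !hom2_aff fxy0 gxy0 mul0r eqxx => /(_ isT).
Qed.

End Degree2.

(** * The normal form of a critical 2-cycle *)

(* x |-> (D + a x) / (b x^2), with critical 2-cycle {0, oo} and 0 critical *)
Definition normal_map (D a b : algC) (U : pt) : pt :=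
  (D * U.2 ^+ 2 + a * U.1 * U.2, b * U.1 ^+ 2).

Definition normal_coef_a (f g : {poly rat}) (p q r s : algC) : algC :=
  q * hom2 f (r + p, s + q) - p * hom2 g (r + p, s + q) - (r * q - p * s).

Definition normal_coef_b (f g : {poly rat}) (r s : algC) : algC :=
  r * hom2 g (r, s) - s * hom2 f (r, s).

Lemma normal_coef_Crat f g {p q r s : algC} :
  p \in Crat -> q \in Crat -> r \in Crat -> s \in Crat ->
  normal_coef_a f g p q r s \in Crat /\ normal_coef_b f g r s \in Crat.
Proof. by move=> pC qC rC sC; rewrite !(rpredB, rpredD, rpredM, hom2_Crat). Qed.

Section NormalFormCoordinates.

Context {f g : {poly rat}} {p q r s : algC}.
Hypothesis image_P : happ f g (p, q) = (r, s).
Hypothesis period2_P : period2 f g (p, q).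

Lemma period2_det_neq0 : r * q - p * s != 0.
Proof. by case: period2_P; rewrite image_P /peq /= subr_eq0. Qed.

Lemma normal_coef_b_neq0 : is_deg2 f g -> normal_coef_b f g r s != 0.
Proof.
move=> deg2; case: period2_P; rewrite image_P /peq /= => nzP /eqP back _.
have D_neq0 := period2_det_neq0; set b := normal_coef_b f g r s.
have nzQ : nzpt (r, s) by rewrite -image_P happ_nzpt.
apply: contraTneq (happ_nzpt deg2 nzQ) => b0; rewrite /nzpt /happ /= negb_or !negbK.
have fQ : hom2 f (r, s) * (r * q - p * s) = 0.
  apply: (eq_lincomb r back); apply: (eq_lincomb p b0).
  by rewrite /b /normal_coef_b; ring.
have gQ : hom2 g (r, s) * (r * q - p * s) = 0.
  apply: (eq_lincomb s back); apply: (eq_lincomb q b0).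
  by rewrite /b /normal_coef_b; ring.
by apply/andP; split; [move/eqP: fQ | move/eqP: gQ];
  rewrite mulf_eq0 (negbTE D_neq0) orbF.
Qed.

(* [mob r p s q] sends (1, 0) to phi(P) and (0, 1) to P. *)
Lemma normal_form_conj : critical f g (p, q) -> forall U,
  happ f g (mob r p s q U) = scale_pt (r * q - p * s)^-1
    (mob r p s q (normal_map (r * q - p * s)
       (normal_coef_a f g p q r s) (normal_coef_b f g r s) U)).
Proof.
move=> [_ [c crit]]; have D_neq0 := period2_det_neq0.
case: period2_P; rewrite image_P /peq /= => _ /eqP back _.
rewrite image_P /= in crit; case: image_P => f_P g_P.
set D := r * q - p * s.
set a := normal_coef_a _ _ _ _ _ _; set b := normal_coef_b _ _ _ _.
have b_crit : b = - c * D ^+ 2.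
  by apply: (eq_lincomb (-1) (crit r s)); rewrite /b /normal_coef_b /D; ring.
case=> X Y; rewrite /mob /happ /scale_pt /normal_map /=.
set x := r * X + p * Y; set y := s * X + q * Y.
have img1 : b * X ^+ 2 = r * hom2 g (x, y) - s * hom2 f (x, y).
  by apply: (eq_lincomb 1 (crit x y)); rewrite b_crit /x /y /D; ring.
have img2 : q * hom2 f (x, y) - p * hom2 g (x, y) = D * Y ^+ 2 + a * X * Y.
  rewrite /x /y !hom2_comb f_P g_P /a /normal_coef_a /D.
  by apply: (eq_lincomb (X ^+ 2 - X * Y) back); ring.
by rewrite -img2 img1 /D; congr pair; field.
Qed.

End NormalFormCoordinates.

Lemma hom2_phiv_num v (X Y : algC) :
  hom2 (phiv_num v) (X, Y) = ratr v * (X * Y - Y ^+ 2).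
Proof.
rewrite hom2E /phiv_num !(coefZ, coefB, coefX, coefC) /=.
rewrite !rmorphM !rmorphB /= rmorph0 rmorph1; ring.
Qed.

Lemma hom2_phiv_den (X Y : algC) : hom2 phiv_den (X, Y) = X ^+ 2.
Proof. by rewrite hom2E /phiv_den !coefXn /= rmorph0 rmorph1; ring. Qed.

Section NormalForm.

Context {f g : {poly rat}} {r p s q a b : algC}.
Local Notation D := (r * q - p * s).
Hypothesis D_neq0 : D != 0.
Hypothesis conjE : forall U,
  happ f g (mob r p s q U) = scale_pt D^-1 (mob r p s q (normal_map D a b U)).

Lemma normal_map_a0_nontrivial_aut (w : algC) :
  a = 0 -> w != 1 -> w ^+ 3 = 1 -> ~ trivial_aut f g.
Proof.
move=> a0 w_neq1 w3 triv; rewrite -subr_eq0 in w_neq1.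
(* M diag(w, 1) adj(M), for M the matrix of [mob r p s q] *)
pose a' := w * r * q - p * s; pose b' := p * r * (1 - w).
pose c' := s * q * (w - 1); pose d' := q * r - w * p * s.
have det' : a' * d' - b' * c' != 0.
  have -> : a' * d' - b' * c' = w * D ^+ 2 by rewrite /a' /b' /c' /d'; ring.
  rewrite mulf_neq0 ?expf_neq0 //; apply/eqP => w0.
  by move/eqP: w3; rewrite w0 expr0n eq_sym oner_eq0.
have rotE V :
    mob a' b' c' d' (mob r p s q V) = scale_pt D (mob r p s q (w * V.1, V.2)).
  by rewrite /mob /scale_pt /a' /b' /c' /d' /=; congr pair; ring.
have comm P :
    nzpt P -> peq (happ f g (mob a' b' c' d' P)) (mob a' b' c' d' (happ f g P)).
  move=> _; rewrite -(mob_adjK P D_neq0); set W := scale_pt _ _.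
  rewrite rotE happ_scale !conjE mob_scale rotE.
  rewrite peq_scalel ?expf_neq0 // peq_scalel ?invr_neq0 // peq_scaler ?invr_neq0 //.
  rewrite peq_scaler // peq_mob // /peq /normal_map a0 /=; apply/eqP.
  by rewrite -[LHS]mulr1 -w3; ring.
have [b'0 c'0 a'd'] := triv a' b' c' d' det' comm.
have pr0 : p * r = 0.
  by apply/eqP; move/eqP: b'0; rewrite mulf_eq0 -opprB oppr_eq0 (negbTE w_neq1) orbF.
have sq0 : s * q = 0.
  by apply/eqP; move/eqP: c'0; rewrite mulf_eq0 (negbTE w_neq1) orbF.
have /eqP : (w - 1) * (r * q + p * s) = 0.
  by apply: (eq_lincomb 1 a'd'); rewrite /a' /d'; ring.
rewrite mulf_eq0 (negbTE w_neq1) /= => /eqP sum0.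
suff : D ^+ 2 = 0 by move/eqP; rewrite expf_eq0 (negbTE D_neq0).
have -> : D ^+ 2 = (r * q + p * s) ^+ 2 - 4 * (p * r) * (s * q) by ring.
by rewrite sum0 pr0 sq0; ring.
Qed.

Lemma normal_form_a_neq0 : trivial_aut f g -> a != 0.
Proof.
move=> triv; apply/eqP => a0; have [w w_neq1 w3] := cube_root_unity.
exact: normal_map_a0_nontrivial_aut a0 w_neq1 w3 triv.
Qed.

Lemma normal_critical {W : pt} : b != 0 -> W.1 != 0 ->
  critical f g (mob r p s q W) -> a * W.1 + 2 * D * W.2 = 0.
Proof.
case: W => W1 W2 /= b_neq0 W1_neq0 [_ [c crit]].
have critZ Z1 Z2 : b * W1 ^+ 2 * (D * Z2 ^+ 2 + a * Z1 * Z2)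
    - (D * W2 ^+ 2 + a * W1 * W2) * (b * Z1 ^+ 2)
    = c * D ^+ 3 * (W2 * Z1 - W1 * Z2) ^+ 2.
  have := crit (mob r p s q (Z1, Z2)).1 (mob r p s q (Z1, Z2)).2.
  rewrite -[hom2 f _]/(happ f g _).1 -[hom2 g _]/(happ f g _).2 -surjective_pairing.
  rewrite !conjE /scale_pt /mob /normal_map /= => critZ.
  by apply: (eq_lincomb D critZ); field.
have W12_neq0 : W1 ^+ 2 != 0 by rewrite expf_neq0.
have c_eq : c * D ^+ 3 = b * D.
  by apply: (mulIf W12_neq0); apply: (eq_lincomb (-1) (critZ 0 1)); ring.
have /eqP : b * W1 * (a * W1 + 2 * D * W2) = 0.
  apply: (eq_lincomb 1 (critZ 1 1)); apply: (eq_lincomb (-1) (critZ 0 1)).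
  apply: (eq_lincomb (-1) (critZ 1 0)); apply: (eq_lincomb (-2 * W1 * W2) c_eq).
  ring.
by rewrite !mulf_eq0 (negbTE b_neq0) (negbTE W1_neq0) => /eqP.
Qed.

(* Being 2-periodic would force a^3 = 8 D^2 b, which makes the point fixed. *)
Lemma normal_critical_not_period2 {W : pt} : a != 0 -> b != 0 -> W.1 != 0 ->
  a * W.1 + 2 * D * W.2 = 0 -> ~ period2 f g (mob r p s q W).
Proof.
case: W => W1 W2 /= a_neq0 b_neq0 W1_neq0 W_crit [_ per nfix].
rewrite !conjE happ_scale conjE peq_scalel ?expf_neq0 ?invr_neq0 //
  peq_scalel ?invr_neq0 // peq_mob // in per.
rewrite conjE peq_scalel ?invr_neq0 // peq_mob // in nfix.
have two_neq0 : (2 : algC) != 0 by rewrite pnatr_eq0.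
have W2E : W2 = - (a * W1) / (2 * D).
  by apply: (eq_lincomb (2 * D)^-1 W_crit); field.
move: per nfix; rewrite W2E /peq /normal_map /= => /eqP per.
have cycle_eq : a ^+ 3 - 8 * D ^+ 2 * b = 0.
  have k_neq0 : W1 ^+ 5 * b * a / (16 * D ^+ 2) != 0.
    have sixteen_neq0 : (16 : algC) != 0 by rewrite pnatr_eq0.
    by rewrite !mulf_neq0 ?invr_neq0 ?expf_neq0 ?mulf_neq0 ?expf_neq0.
  by apply: (mulfI k_neq0); rewrite mulr0; apply: (eq_lincomb 1 per); field.
move/negP; apply; apply/eqP.
by apply: (eq_lincomb (W1 ^+ 3 / (8 * D ^+ 2)) cycle_eq); field.
Qed.

Lemma critical_period2_unique {P : pt} : a != 0 -> b != 0 ->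
  critical f g P -> period2 f g P -> peq P (p, q).
Proof.
move=> a_neq0 b_neq0; rewrite -(mob_adjK P D_neq0); set W := scale_pt _ _.
have -> : (p, q) = mob r p s q (0, 1) by rewrite /mob /= !mulr0 !mulr1 !add0r.
rewrite peq_mob // /peq /= mulr1 mul0r => crit per.
have [//|W1_neq0] := eqVneq W.1 0.
have crit_W := normal_critical b_neq0 W1_neq0 crit.
by case: (normal_critical_not_period2 a_neq0 b_neq0 W1_neq0 crit_W per).
Qed.

(* Rescaling x by k = - D / a turns [normal_map D a b] into phi_v, v = a^3 / (b D^2). *)
Lemma normal_form_over_Q :
  p \in Crat -> q \in Crat -> r \in Crat -> s \in Crat -> a \in Crat -> b \in Crat ->
  a != 0 -> b != 0 ->
  exists v : rat, v != 0 /\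
    exists a' b' c' d' : rat, a' * d' - b' * c' != 0 /\
      forall P : pt, nzpt P ->
        peq (happ f g (mob (ratr a') (ratr b') (ratr c') (ratr d') P))
            (mob (ratr a') (ratr b') (ratr c') (ratr d')
                 (happ (phiv_num v) phiv_den P)).
Proof.
move=> pC qC rC sC aC bC a_neq0 b_neq0; set k := - D / a.
have k_neq0 : k != 0 by rewrite mulf_neq0 ?oppr_eq0 ?invr_neq0.
have kC : k \in Crat by rewrite !(rpredM, rpredN, rpredB, rpredV).
have /CratP [v vE] : a ^+ 3 / (b * D ^+ 2) \in Crat.
  by rewrite !(rpredM, rpredN, rpredB, rpredV, rpredX).
exists v; split.
  have : (ratr v : algC) != 0.
    by rewrite -vE mulf_neq0 ?expf_neq0 ?invr_neq0 ?mulf_neq0 ?expf_neq0.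
  by apply: contraNneq => ->; rewrite rmorph0.
have /CratP [a' a'E] : r * k \in Crat by rewrite rpredM.
have /CratP [c' c'E] : s * k \in Crat by rewrite rpredM.
have /CratP [b' b'E] := pC; have /CratP [d' d'E] := qC.
exists a', b', c', d'; split.
  rewrite -(fmorph_eq0 (ratr : rat -> algC)) rmorphB !rmorphM /= -a'E -b'E -c'E -d'E.
  have -> : r * k * q - p * (s * k) = k * D by ring.
  by rewrite mulf_neq0.
case=> X Y _; rewrite -a'E -b'E -c'E -d'E.
have scaleE (U : pt) : mob (r * k) p (s * k) q U = mob r p s q (k * U.1, U.2).
  by rewrite /mob /=; congr pair; ring.
rewrite !scaleE conjE peq_scalel ?invr_neq0 // peq_mob // /peq /normal_map /happ /=.
rewrite hom2_phiv_num hom2_phiv_den -vE; apply/eqP.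
by rewrite /k; field; rewrite a_neq0 b_neq0 D_neq0.
Qed.

End NormalForm.

(** * Rationality of the critical 2-periodic point *)

Lemma root_map_modp {w : {poly rat}} {z : algC} (R : {poly rat}) :
  (size w <= 3)%N -> w != 0 -> z \notin Crat -> (map_poly ratr w).[z] = 0 ->
  ((map_poly ratr R).[z] == 0) = ((R %% w)`_0 == 0) && ((R %% w)`_1 == 0).
Proof.
move=> size_w w_neq0 z_irr wz0; set m := R %% w.
rewrite {1}(divp_eq R w) rmorphD rmorphM /= hornerD hornerM wz0 mulr0 add0r.
have size_m : (size m <= 2)%N by rewrite -ltnS (leq_trans _ size_w) ?ltn_modp.
rewrite horner_map_size3 ?(leq_trans size_m) //.
rewrite [m`_2]nth_default // rmorph0 mul0r addr0.
apply/eqP/andP => [mz0|[/eqP -> /eqP ->]]; last by rewrite rmorph0 mul0r addr0.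
have m1 : m`_1 = 0.
  by apply: contraNeq z_irr => m1_neq0; apply: Crat_linear_root m1_neq0 mz0.
by move: mz0; rewrite m1 rmorph0 mul0r addr0 => /eqP; rewrite fmorph_eq0.
Qed.

(* The other root [z'] of the quadratic [w] is the Galois conjugate of [z]. *)
Lemma quadratic_conj_root {w : {poly rat}} {z : algC} :
  (size w <= 3)%N -> w != 0 -> z \notin Crat -> (map_poly ratr w).[z] = 0 ->
  exists2 z', z' != z & forall R : {poly rat},
    ((map_poly ratr R).[z] == 0) = ((map_poly ratr R).[z'] == 0).
Proof.
move=> size_w w_neq0 z_irr wz0.
have w2_neq0 : w`_2 != 0.
  apply: contra z_irr => /eqP w2; have size_w2 := size_poly_leq_coef0 size_w w2.
  move: wz0; rewrite horner_map_size3 // w2 rmorph0 mul0r addr0.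
  have [w1 wz0|w1_neq0] := eqVneq w`_1 0; last exact: Crat_linear_root.
  move: wz0 w_neq0; rewrite w1 rmorph0 mul0r addr0 => /eqP.
  rewrite fmorph_eq0 => /eqP w0.
  case/negP; apply/eqP/polyP => -[|[|i]]; rewrite coef0 ?w0 ?w1 //.
  exact: nth_default (leq_trans size_w2 _).
have w2C : (ratr w`_2 : algC) != 0 by rewrite fmorph_eq0.
pose z' := ratr (- (w`_1 / w`_2)) - z.
have z'_irr : z' \notin Crat.
  apply: contra z_irr => z'C.
  by rewrite -[z](subKr (ratr (- (w`_1 / w`_2)))) rpredB ?Crat_rat.
have wz'0 : (map_poly ratr w).[z'] = 0.
  move: wz0; rewrite !horner_map_size3 // /z' rmorphN fmorph_div /= => wz0.
  by apply: (eq_lincomb 1 wz0); field.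
exists z'.
  apply: contra z_irr => /eqP z'E; have two_neq0 : (2 : algC) != 0 by rewrite pnatr_eq0.
  suff -> : z = ratr (- (w`_1 / w`_2) / 2) by apply: Crat_rat.
  rewrite fmorph_div rmorph_nat /=.
  by apply: (eq_lincomb (- 2^-1) z'E); rewrite /z'; field.
move=> R; rewrite (root_map_modp R size_w w_neq0 z_irr wz0).
by rewrite (root_map_modp R size_w w_neq0 z'_irr wz'0).
Qed.

(* The Wronskian f' g - f g', for f and g of degree at most 2. *)
Definition crit_poly (f g : {poly rat}) : {poly rat} :=
  Poly [:: f`_1 * g`_0 - f`_0 * g`_1; 2 * (f`_2 * g`_0 - f`_0 * g`_2);
           f`_2 * g`_1 - f`_1 * g`_2].

Lemma size_crit_poly f g : (size (crit_poly f g) <= 3)%N.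
Proof. exact: size_Poly. Qed.

Definition fix_poly (f g : {poly rat}) : {poly rat} := f - 'X * g.

Definition fix2_poly (f g : {poly rat}) : {poly rat} :=
  (f`_0)%:P * g ^+ 2 + (f`_1)%:P * (f * g) + (f`_2)%:P * f ^+ 2
  - 'X * ((g`_0)%:P * g ^+ 2 + (g`_1)%:P * (f * g) + (g`_2)%:P * f ^+ 2).

Lemma horner_map_hom2 (f : {poly rat}) (t : algC) :
  (size f <= 3)%N -> (map_poly ratr f).[t] = hom2 f (t, 1).
Proof. by move=> size_f; rewrite horner_map_size3 // hom2E; ring. Qed.

Lemma criticalP_affine f g (t : algC) :
  critical f g (t, 1) <-> (map_poly ratr (crit_poly f g)).[t] = 0.
Proof.
have -> : (map_poly ratr (crit_poly f g)).[t] =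
    (ratr f`_1 * ratr g`_0 - ratr f`_0 * ratr g`_1)
    + 2 * (ratr f`_2 * ratr g`_0 - ratr f`_0 * ratr g`_2) * t
    + (ratr f`_2 * ratr g`_1 - ratr f`_1 * ratr g`_2) * t ^+ 2.
  rewrite horner_map_size3 ?size_crit_poly // !coef_Poly /= !(rmorphB, rmorphM) /=.
  by rewrite rmorph_nat.
split=> [[_ [c crit]] | crit_t].
  have := crit 1 0; have := crit 0 1; have := crit 1 1.
  rewrite /happ /= !hom2E => crit11 crit01 crit10.
  apply: (eq_lincomb 1 crit11); apply: (eq_lincomb (-1) crit01).
  by apply: (eq_lincomb (2 * t - 1) crit10); ring.
split; first by rewrite /nzpt /= oner_neq0 orbT.
exists (hom2 g (t, 1) * ratr f`_2 - hom2 f (t, 1) * ratr g`_2) => x y.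
by rewrite /happ /= !hom2E; apply: (eq_lincomb (x * y - t * y ^+ 2) crit_t); ring.
Qed.

Section AffineFixedPoints.

Context {f g : {poly rat}}.
Hypothesis deg2 : is_deg2 f g.

Lemma horner_fix_poly (t : algC) :
  (map_poly ratr (fix_poly f g)).[t] = hom2 f (t, 1) - t * hom2 g (t, 1).
Proof.
have [size_f size_g] := size_deg2 deg2.
rewrite /fix_poly rmorphB rmorphM /= map_polyX.
by rewrite hornerD hornerN hornerM hornerX !horner_map_hom2.
Qed.

Lemma horner_fix2_poly (t : algC) :
  (map_poly ratr (fix2_poly f g)).[t] =
  hom2 f (happ f g (t, 1)) - t * hom2 g (happ f g (t, 1)).
Proof.
have [size_f size_g] := size_deg2 deg2.
rewrite /fix2_poly !(rmorphB, rmorphD, rmorphM, rmorphXn) /= !map_polyC map_polyX /=.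
rewrite !(hornerD, hornerN, hornerM, hornerX, hornerC, horner_exp) !horner_map_hom2 //.
by rewrite /happ /= !hom2E; ring.
Qed.

Lemma period2P_affine (t : algC) :
  period2 f g (t, 1) <->
  (map_poly ratr (fix2_poly f g)).[t] = 0 /\ (map_poly ratr (fix_poly f g)).[t] != 0.
Proof.
rewrite horner_fix2_poly horner_fix_poly /period2 /peq /nzpt /= oner_neq0 orbT !mulr1.
split=> [[_ /eqP per nfix] | [per nfix]].
  by rewrite per subrr subr_eq0.
by split=> //; rewrite -subr_eq0 ?per.
Qed.

End AffineFixedPoints.

Lemma crit_poly_eq0_minors {f g : {poly rat}} :
  (size f <= 3)%N -> (size g <= 3)%N ->
  crit_poly f g = 0 -> forall i j, f`_i * g`_j = f`_j * g`_i.
Proof.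
move=> size_f size_g W0.
have coefW0 k : (crit_poly f g)`_k = 0 by rewrite W0 coef0.
have m01 : f`_0 * g`_1 = f`_1 * g`_0.
  apply/esym/eqP; rewrite -subr_eq0.
  by move: (coefW0 0%N); rewrite coef_Poly /= => ->.
have m12 : f`_1 * g`_2 = f`_2 * g`_1.
  apply/esym/eqP; rewrite -subr_eq0.
  by move: (coefW0 2%N); rewrite coef_Poly /= => ->.
have m02 : f`_0 * g`_2 = f`_2 * g`_0.
  apply/esym/eqP; rewrite -subr_eq0.
  move: (coefW0 1%N); rewrite coef_Poly /= => /eqP.
  by rewrite mulf_eq0 pnatr_eq0.
have out k : (3 <= k)%N -> f`_k = 0 /\ g`_k = 0.
  by move=> k_ge3; rewrite !nth_default ?(leq_trans _ k_ge3).
move=> [|[|[|i]]] [|[|[|j]]] //;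
  first [ exact: m01 | exact: esym m01 | exact: m12 | exact: esym m12
        | exact: m02 | exact: esym m02
        | by have [-> ->] := out i.+3 isT; rewrite mul0r mulr0
        | by have [-> ->] := out j.+3 isT; rewrite mul0r mulr0 ].
Qed.

Lemma crit_poly_neq0 {f g : {poly rat}} : is_deg2 f g -> crit_poly f g != 0.
Proof.
move=> deg2; have [size_f size_g] := size_deg2 deg2; case/andP: deg2 => cop /eqP max3.
apply/eqP => /(crit_poly_eq0_minors size_f size_g) minors0.
by have := coprimep_proportional minors0 cop; rewrite -geq_max max3.
Qed.

Lemma critical_period2_Crat {f g : {poly rat}} {t : algC} :
  is_deg2 f g -> trivial_aut f g ->
  critical f g (t, 1) -> period2 f g (t, 1) -> t \in Crat.
Proof.
move=> deg2 triv crit per; apply/contraT => t_irr.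
case image_P : (happ f g (t, 1)) => [r s].
have D_neq0 := period2_det_neq0 image_P per.
have conjE := normal_form_conj image_P per crit.
have a_neq0 := normal_form_a_neq0 D_neq0 conjE triv.
have b_neq0 := normal_coef_b_neq0 image_P per deg2.
have [|t' t'_neq_t t'_conj] :=
  quadratic_conj_root (size_crit_poly f g) (crit_poly_neq0 deg2) t_irr.
  exact/criticalP_affine.
have crit' : critical f g (t', 1).
  by apply/criticalP_affine/eqP; rewrite -t'_conj; apply/eqP/criticalP_affine.
have per' : period2 f g (t', 1).
  have [fix2_t fix_t] := (period2P_affine deg2 _).1 per.
  apply/(period2P_affine deg2); split; last by rewrite -t'_conj.
  by apply/eqP; rewrite -t'_conj fix2_t.
have := critical_period2_unique D_neq0 conjE a_neq0 b_neq0 crit' per'.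
by rewrite /peq /= !mulr1 (negbTE t'_neq_t).
Qed.

Lemma rational_critical_period2 {f g : {poly rat}} {P : pt} :
  is_deg2 f g -> trivial_aut f g ->
  critical f g P -> period2 f g P ->
  exists p q : rat, critical f g (ratr p, ratr q) /\ period2 f g (ratr p, ratr q).
Proof.
case: P => x y deg2 triv crit per; have nzP : nzpt (x, y) by case: crit.
have [y0|y_neq0] := eqVneq y 0.
  have x_neq0 : x != 0 by move: nzP; rewrite /nzpt y0 eqxx orbF.
  exists 1, 0; rewrite rmorph1 rmorph0.
  have -> : ((1 : algC), (0 : algC)) = scale_pt x^-1 (x, y).
    by rewrite /scale_pt y0 mulr0 mulVf.
  by split; [apply: critical_scale | apply: period2_scale]; rewrite ?invr_neq0.
have affineE : scale_pt y^-1 (x, y) = (x / y, 1) by rewrite /scale_pt /= mulVf // mulrC.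
have crit1 := critical_scale (invr_neq0 y_neq0) crit.
have per1 := period2_scale (invr_neq0 y_neq0) per.
rewrite affineE in crit1 per1.
have /CratP [t tE] := critical_period2_Crat deg2 triv crit1 per1.
by exists t, 1; rewrite rmorph1 -tE.
Qed.

Theorem lemma2p5 (f g : {poly rat}) :
  is_deg2 f g ->
  (exists P : pt, critical f g P /\ period2 f g P) ->
  trivial_aut f g ->
  exists v : rat, v != 0 /\
    exists a b c d : rat, a * d - b * c != 0 /\
      forall P : pt, nzpt P ->
        peq (happ f g (mob (ratr a) (ratr b) (ratr c) (ratr d) P))
            (mob (ratr a) (ratr b) (ratr c) (ratr d)
                 (happ (phiv_num v) phiv_den P)).
Proof.
move=> deg2 [P [crit per]] triv.
have [p [q [crit_pq per_pq]]] := rational_critical_period2 deg2 triv crit per.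
have [pC qC] := (Crat_rat p, Crat_rat q).
case image_P : (happ f g (ratr p, ratr q)) => [r s].
have [rC sC] : r \in Crat /\ s \in Crat.
  by case: image_P => <- <-; rewrite !hom2_Crat.
have D_neq0 := period2_det_neq0 image_P per_pq.
have conjE := normal_form_conj image_P per_pq crit_pq.
have [aC bC] := normal_coef_Crat f g pC qC rC sC.
apply: (normal_form_over_Q D_neq0 conjE pC qC rC sC aC bC).
- exact: normal_form_a_neq0 D_neq0 conjE triv.
- exact: normal_coef_b_neq0 image_P per_pq deg2.
Qed.
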